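(* If $0\leq\alpha<1$ and $\beta\geq2$, then $T_{\alpha,\beta}$ is transitive.
   Context: $T_{\alpha,\beta}\colon[0,1]\to[0,1]$ is given by $T_{\alpha,\beta}(x)=\beta x+\alpha-\lfloor\beta x+\alpha\rfloor$ for $x\in[0,1)$ and $T_{\alpha,\beta}(1)=\lim_{x\nearrow1}T_{\alpha,\beta}(x)$. A map $T\colon[0,1]\to[0,1]$ is transitive if there is $x\in[0,1]$ whose forward orbit $\{T^n(x)\colon n\geq0\}$ is dense in $[0,1]$. *)

From Stdlib Require Import Reals.
Open Scope R_scope.

(* floor(x) as an integer: Int_part x = up x - 1, the greatest integer <= x. *)
Definition rfloor (x : R) : R := IZR (Int_part x).

Definition rceil (x : R) : R := - rfloor (- x).

(* The map T_{alpha,beta} on [0,1]: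
   T(x) = beta x + alpha - floor(beta x + alpha) for x in [0,1),
   T(1) = lim_{x -> 1^-} T(x) = (beta + alpha) - (ceil(beta + alpha) - 1)
   (left limit of the fractional part at beta + alpha, for beta > 0). *)
Definition T (alpha beta x : R) : R :=
  if Rlt_dec x 1 then beta * x + alpha - rfloor (beta * x + alpha)
  else (beta + alpha) - (rceil (beta + alpha) - 1).

Definition transitive_on01 (f : R -> R) : Prop :=
  exists x : R, 0 <= x <= 1 /\
    forall y eps : R, 0 <= y <= 1 -> 0 < eps ->
      exists n : nat, Rabs (Nat.iter n f x - y) < eps.

(* Every nondegenerate subinterval of [0,1] contains a full branch of some
   iterate T^n: an open interval that T^n maps affinely onto (0,1).
   For beta > 2, every interval contains either a whole lap of T or a
   subinterval of at least half its length on which T is affine, so the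
   lengths of the images grow by a factor beta/2 until a whole lap is covered.
   For integer beta, T^n x = beta^n x + C_n (mod 1), so T^n is affine onto
   (0,1) between consecutive points of beta^-n (Z - C_n).
   Full branches everywhere let us shrink any interval into a subinterval
   mapped into any prescribed ball by some iterate; doing this successively
   for a countable base of balls gives nested intervals whose common point has
   a dense orbit. *)
From Stdlib Require Import Reals Lra Lia ZArith Cantor Classical IndefiniteDescription.
Open Scope R_scope.

Lemma rfloor_spec (y : R) : rfloor y <= y < rfloor y + 1.
Proof. unfold rfloor; destruct (base_Int_part y); lra. Qed.

Lemma rfloor_unique (y : R) (k : Z) : IZR k <= y < IZR k + 1 -> rfloor y = IZR k.
Proof.
  intros [Hk Hk1]; unfold rfloor; destruct (base_Int_part y) as [B1 B2]; f_equal.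
  assert (A1 : (Int_part y < k + 1)%Z) by (apply lt_IZR; rewrite plus_IZR; lra).
  assert (A2 : (k < Int_part y + 1)%Z) by (apply lt_IZR; rewrite plus_IZR; lra).
  lia.
Qed.

Lemma IZR_eq0_of_small (z : Z) : -1 < IZR z < 1 -> z = 0%Z.
Proof. intros [H1 H2]; apply lt_IZR in H1; apply lt_IZR in H2; lia. Qed.

Lemma nat_floor_exists (t : R) : 0 <= t -> exists i : nat, INR i <= t < INR i + 1.
Proof.
  intros Ht; destruct (base_Int_part t) as [B1 B2].
  assert (Hpos : (0 <= Int_part t)%Z)
    by (apply Z.lt_succ_r, lt_IZR; rewrite succ_IZR; lra).
  exists (Z.to_nat (Int_part t)); rewrite INR_IZR_INZ, Z2Nat.id by exact Hpos; lra.
Qed.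

Lemma nested_intervals_common_point (a b : nat -> R) :
  (forall k, a k <= b k) -> (forall k, a k <= a (S k)) -> (forall k, b (S k) <= b k) ->
  exists m, forall k, a k <= m <= b k.
Proof.
  intros Hab Ha Hb.
  assert (Hab' : forall j k, a j <= b k).
  { intros j k.
    assert (a j <= a (Nat.max j k))
      by (apply Rge_le, growing_prop; [exact Ha | lia]).
    assert (b (Nat.max j k) <= b k) by (apply decreasing_prop; [exact Hb | lia]).
    specialize (Hab (Nat.max j k)); lra. }
  destruct (completeness (fun y => exists j, y = a j)) as [m [Hub Hlub]].
  - exists (b 0%nat); intros y [j ->]; apply Hab'.
  - exists (a 0%nat), 0%nat; reflexivity.
  - exists m; intros k; split.
    + apply Hub; exists k; reflexivity.
    + apply Hlub; intros y [j ->]; apply Hab'.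
Qed.

Fixpoint refinements (g : nat -> R * R -> R * R) (k : nat) : R * R :=
  match k with O => (0, 1) | S k => g k (refinements g k) end.

Section NestedIntervals.

Variable P : nat -> R -> R -> Prop.

Hypothesis Hrefine : forall k a b, 0 <= a -> a < b -> b <= 1 ->
  exists a' b', a <= a' /\ a' < b' /\ b' <= b /\ P k a' b'.

Lemma nested_sequence_exists : exists a b : nat -> R,
  (forall k, 0 <= a k /\ a k < b k /\ b k <= 1) /\
  (forall k, a k <= a (S k) /\ b (S k) <= b k) /\
  (forall k, P k (a (S k)) (b (S k))).
Proof.
  destruct (functional_choice (fun (kI : nat * (R * R)) J =>
      0 <= fst (snd kI) -> fst (snd kI) < snd (snd kI) -> snd (snd kI) <= 1 ->
      fst (snd kI) <= fst J /\ fst J < snd J /\ snd J <= snd (snd kI) /\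
      P (fst kI) (fst J) (snd J))) as [g Hg].
  { intros [k [a b]]; cbn.
    destruct (classic (0 <= a /\ a < b /\ b <= 1)) as [(H0 & Hab & H1) | Hinvalid].
    - destruct (Hrefine k a b H0 Hab H1) as (a' & b' & HJ); exists (a', b'); auto.
    - exists (a, b); intros; exfalso; auto. }
  set (I := refinements (fun k J => g (k, J))).
  assert (Hvalid : forall k, 0 <= fst (I k) /\ fst (I k) < snd (I k) /\ snd (I k) <= 1).
  { induction k as [|k (H0 & Hab & H1)]; cbn; [lra|].
    destruct (Hg (k, I k) H0 Hab H1); cbn in *; lra. }
  exists (fun k => fst (I k)), (fun k => snd (I k)); split; [exact Hvalid|].
  split; intros k; destruct (Hvalid k) as (H0 & Hab & H1);
    destruct (Hg (k, I k) H0 Hab H1) as (Ha & Hab' & Hb & HP); cbn in *; auto.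
Qed.

Lemma nested_intervals_meet :
  exists m, 0 <= m <= 1 /\ forall k, exists a b, a <= m <= b /\ P k a b.
Proof.
  destruct nested_sequence_exists as (a & b & Hvalid & Hmono & HP).
  destruct (nested_intervals_common_point a b) as [m Hm];
    try (intros k; destruct (Hvalid k), (Hmono k); lra).
  exists m; split.
  - destruct (Hm 0%nat), (Hvalid 0%nat); lra.
  - intros k; exists (a (S k)), (b (S k)); auto.
Qed.

End NestedIntervals.

Lemma ball_contains_interval (c r : R) : 0 <= c <= 1 -> 0 < r ->
  exists u v, 0 <= u /\ u < v /\ v <= 1 /\ forall y, u <= y <= v -> Rabs (y - c) < r.
Proof.
  intros Hc Hr; exists (Rmax 0 (c - r / 2)), (Rmin 1 (c + r / 2)).
  pose proof (Rmax_r 0 (c - r / 2)); pose proof (Rmin_r 1 (c + r / 2)).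
  split; [|split; [|split]].
  - apply Rmax_l.
  - apply Rmax_lub_lt; apply Rmin_glb_lt; lra.
  - apply Rmin_l.
  - intros y Hy; apply Rabs_def1; lra.
Qed.

Definition grid_ball (k : nat) : R * R :=
  let (i, j) := Cantor.of_nat k in (Rmin 1 (INR i / INR (S j)), / INR (S j)).

Lemma grid_ball_valid (k : nat) : 0 <= fst (grid_ball k) <= 1 /\ 0 < snd (grid_ball k).
Proof.
  unfold grid_ball; destruct (Cantor.of_nat k) as [i j]; cbn [fst snd].
  assert (0 < INR (S j)) by (apply lt_0_INR; lia).
  pose proof (pos_INR i).
  split; [split|].
  - apply Rmin_glb; [lra|]; apply Rmult_le_pos; [lra | left; apply Rinv_0_lt_compat; lra].
  - apply Rmin_l.
  - apply Rinv_0_lt_compat; lra.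
Qed.

Lemma grid_balls_dense (y eps : R) : 0 <= y <= 1 -> 0 < eps ->
  exists k, forall z, Rabs (z - fst (grid_ball k)) < snd (grid_ball k) -> Rabs (z - y) < eps.
Proof.
  intros Hy Heps.
  destruct (archimed_cor1 (eps / 2)) as (N & HN & HN0); [lra|].
  assert (HNpos : 0 < INR N) by (apply lt_0_INR; lia).
  destruct (nat_floor_exists (y * INR N)) as (i & Hi); [nra|].
  exists (Cantor.to_nat (i, Nat.pred N)).
  unfold grid_ball; rewrite Cantor.cancel_of_to, Nat.succ_pred_pos by lia; cbn [fst snd].
  assert (Ei : INR i / INR N * INR N = INR i) by (field; lra).
  assert (EN : / INR N * INR N = 1) by (field; lra).
  assert (Hc : INR i / INR N <= y /\ y - / INR N < INR i / INR N) by (split; nra).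
  rewrite Rmin_right by lra.
  intros z Hz; apply Rabs_def2 in Hz; apply Rabs_def1; lra.
Qed.

Section FullBranches.

Variable f : R -> R.

Definition full_branch (n : nat) (p q : R) : Prop :=
  forall x, p < x < q -> Nat.iter n f x = (x - p) / (q - p).

Definition full_branches_dense : Prop :=
  forall a b, 0 <= a -> a < b -> b <= 1 ->
    exists n p q, a <= p /\ p < q /\ q <= b /\ full_branch n p q.

Definition affine_on (s c l r : R) : Prop := forall x, l < x < r -> f x = s * x + c.

Lemma full_branch_id : full_branch 0 0 1.
Proof. intros x _; cbn; field. Qed.

Lemma full_branch_pullback (s c l r : R) (n : nat) (p q : R) :
  0 < s -> affine_on s c l r -> s * l + c <= p -> p < q -> q <= s * r + c ->
  full_branch n p q ->
  l <= (p - c) / s /\ (p - c) / s < (q - c) / s /\ (q - c) / s <= r /\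
  full_branch (S n) ((p - c) / s) ((q - c) / s).
Proof.
  intros Hs Haff Hl Hpq Hr Hfull.
  assert (Ep : s * ((p - c) / s) = p - c) by (field; lra).
  assert (Eq : s * ((q - c) / s) = q - c) by (field; lra).
  split; [nra|]; split; [nra|]; split; [nra|].
  intros x Hx; rewrite Nat.iter_succ_r, Haff, Hfull by nra.
  field; lra.
Qed.

Lemma full_branch_into_interval (n : nat) (p q u v : R) :
  p < q -> 0 <= u -> u < v -> v <= 1 -> full_branch n p q ->
  exists a b, p < a /\ a < b /\ b < q /\
    forall x, a <= x <= b -> u <= Nat.iter n f x <= v.
Proof.
  intros Hpq Hu Huv Hv Hfull.
  (* The margins 0 < u' and v' < 1 keep the preimage [a, b] inside the open (p, q). *)
  assert (Hinner : exists u' v', u <= u' /\ 0 < u' /\ u' < v' /\ v' < 1 /\ v' <= v)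
    by (exists ((2 * u + v) / 3), ((u + 2 * v) / 3); lra).
  destruct Hinner as (u' & v' & Hu' & Hu'0 & Huv' & Hv'1 & Hv').
  exists (p + u' * (q - p)), (p + v' * (q - p)).
  split; [nra|]; split; [nra|]; split; [nra|].
  intros x Hx; rewrite Hfull by nra.
  assert (E : x - p = (x - p) / (q - p) * (q - p)) by (field; lra).
  split; nra.
Qed.

Lemma transitive_on01_of_full_branches_dense : full_branches_dense -> transitive_on01 f.
Proof.
  intros Hdense.
  destruct (nested_intervals_meet (fun k a b => exists n, forall x, a <= x <= b ->
              Rabs (Nat.iter n f x - fst (grid_ball k)) < snd (grid_ball k)))
    as (m & Hm01 & Hm).
  { intros k a b Ha Hab Hb.
    destruct (grid_ball_valid k) as [Hc Hr].
    destruct (ball_contains_interval _ _ Hc Hr) as (u & v & Hu & Huv & Hv & Hball).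
    destruct (Hdense a b Ha Hab Hb) as (n & p & q & Hp & Hpq & Hq & Hfull).
    destruct (full_branch_into_interval n p q u v Hpq Hu Huv Hv Hfull)
      as (a' & b' & Ha' & Hab' & Hb' & Hinto).
    exists a', b'; split; [lra|]; split; [lra|]; split; [lra|].
    exists n; intros x Hx; apply Hball, Hinto, Hx. }
  exists m; split; [exact Hm01|].
  intros y eps Hy Heps.
  destruct (grid_balls_dense y eps Hy Heps) as [k Hk].
  destruct (Hm k) as (a & b & Hab & n & Hn).
  exists n; apply Hk, Hn, Hab.
Qed.

End FullBranches.

Section BetaTransformation.

Variables alpha beta : R.

Lemma T_range (x : R) : 0 <= T alpha beta x <= 1.
Proof.
  unfold T, rceil; destruct (Rlt_dec x 1).
  - pose proof (rfloor_spec (beta * x + alpha)); lra.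
  - pose proof (rfloor_spec (- (beta + alpha))); lra.
Qed.

Lemma iter_T_range (n : nat) (x : R) : 0 <= x <= 1 -> 0 <= Nat.iter n (T alpha beta) x <= 1.
Proof. destruct n as [|n]; [auto | intros _; apply T_range]. Qed.

Lemma T_eq_mod1 (x : R) : x <= 1 -> exists z : Z, T alpha beta x = beta * x + alpha + IZR z.
Proof.
  intros Hx; unfold T, rceil, rfloor; destruct (Rlt_dec x 1).
  - exists (- Int_part (beta * x + alpha))%Z; rewrite opp_IZR; lra.
  - exists (Int_part (- (beta + alpha)) + 1)%Z; rewrite plus_IZR.
    replace x with 1 by lra; lra.
Qed.

Lemma T_affine_on_lap (k : Z) (l r : R) :
  0 < beta -> r <= 1 -> IZR k <= beta * l + alpha -> beta * r + alpha <= IZR k + 1 ->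
  affine_on (T alpha beta) beta (alpha - IZR k) l r.
Proof.
  intros Hbeta Hr Hl Hk x Hx; unfold T; destruct (Rlt_dec x 1); [|lra].
  rewrite (rfloor_unique _ k); [ring | split; nra].
Qed.

Lemma T_expanding_piece (a b : R) : 0 < beta -> a < b -> b <= 1 ->
  exists l r c, a <= l /\ l < r /\ r <= b /\ affine_on (T alpha beta) beta c l r /\
    0 <= beta * l + c /\ beta * r + c <= 1 /\ Rmin 1 (beta * (b - a) / 2) <= beta * (r - l).
Proof.
  intros Hbeta Hab Hb.
  set (k := Int_part (beta * a + alpha)).
  destruct (base_Int_part (beta * a + alpha)) as [Hk Hk1]; fold k in Hk, Hk1.
  (* e is the right end of the lap of T containing a *)
  set (e := (IZR k + 1 - alpha) / beta).
  assert (He : beta * e = IZR k + 1 - alpha) by (unfold e; field; lra).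
  assert (Hae : a < e) by nra.
  pose proof (Rmin_l 1 (beta * (b - a) / 2)); pose proof (Rmin_r 1 (beta * (b - a) / 2)).
  destruct (Rle_lt_dec b e) as [Hbe | Heb].
  - exists a, b, (alpha - IZR k); split; [lra|]; split; [lra|]; split; [lra|].
    split; [apply T_affine_on_lap; nra|]; nra.
  - assert (Hk2 : IZR (k + 1) = IZR k + 1) by apply plus_IZR.
    destruct (Rle_lt_dec (e + / beta) b) as [Hlap | Hnolap].
    + assert (Hlap1 : beta * (e + / beta) = beta * e + 1) by (field; lra).
      assert (0 < / beta) by (apply Rinv_0_lt_compat; lra).
      exists e, (e + / beta), (alpha - IZR (k + 1)).
      split; [lra|]; split; [lra|]; split; [lra|].
      split; [apply T_affine_on_lap; nra|]; nra.
    + assert (beta * b < beta * e + 1)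
        by (replace (beta * e + 1) with (beta * (e + / beta)) by (field; lra); nra).
      destruct (Rle_lt_dec (b - e) (e - a)).
      * exists a, e, (alpha - IZR k); split; [lra|]; split; [lra|]; split; [lra|].
        split; [apply T_affine_on_lap; nra|]; nra.
      * exists e, b, (alpha - IZR (k + 1)); split; [lra|]; split; [lra|]; split; [lra|].
        split; [apply T_affine_on_lap; nra|]; nra.
Qed.

End BetaTransformation.

Lemma T_full_branch_in_long_interval (alpha beta : R) (N : nat) (a b : R) :
  2 < beta -> 0 <= a -> a < b -> b <= 1 -> 1 <= (beta / 2) ^ N * (b - a) ->
  exists n p q, a <= p /\ p < q /\ q <= b /\ full_branch (T alpha beta) n p q.
Proof.
  intros Hbeta; revert a b; induction N as [|N IH]; intros a b Ha Hab Hb Hlong.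
  - exists 0%nat, 0, 1; cbn in Hlong; split; [lra|]; split; [lra|]; split; [lra|].
    replace a with 0 by lra; apply full_branch_id.
  - destruct (T_expanding_piece alpha beta a b ltac:(lra) Hab Hb)
      as (l & r & c & Hl & Hlr & Hr & Haff & Hl0 & Hr1 & Hgrow).
    assert (Hpow : 1 <= (beta / 2) ^ N) by (apply pow_R1_Rle; lra).
    assert (Himage : 1 <= (beta / 2) ^ N * (beta * r + c - (beta * l + c))).
    { cbn in Hlong.
      destruct (Rle_lt_dec 1 (beta * (b - a) / 2)) as [Hbig | Hsmall].
      - rewrite Rmin_left in Hgrow by lra; nra.
      - rewrite Rmin_right in Hgrow by lra; nra. }
    destruct (IH (beta * l + c) (beta * r + c) Hl0 ltac:(nra) Hr1 Himage)
      as (n & p & q & Hp & Hpq & Hq & Hfull).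
    destruct (full_branch_pullback _ beta c l r n p q ltac:(lra) Haff Hp Hpq Hq Hfull)
      as (Hp' & Hpq' & Hq' & Hfull').
    exists (S n), ((p - c) / beta), ((q - c) / beta); split; [lra|]; split; [lra|].
    split; [lra | exact Hfull'].
Qed.

Lemma T_full_branches_dense_expanding (alpha beta : R) :
  2 < beta -> full_branches_dense (T alpha beta).
Proof.
  intros Hbeta a b Ha Hab Hb.
  destruct (Pow_x_infinity (beta / 2) ltac:(rewrite Rabs_pos_eq; lra) (/ (b - a)))
    as [N HN].
  specialize (HN N (le_n N)); rewrite Rabs_pos_eq in HN by (apply pow_le; lra).
  apply (T_full_branch_in_long_interval alpha beta N); auto.
  apply (Rmult_le_reg_r (/ (b - a))); [apply Rinv_0_lt_compat; lra|].
  rewrite Rmult_assoc, Rinv_r, Rmult_1_l, Rmult_1_r by lra; lra.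
Qed.

Fixpoint drift (alpha beta : R) (n : nat) : R :=
  match n with O => 0 | S n => beta * drift alpha beta n + alpha end.

Lemma iter_T_eq_mod1 (alpha : R) (m : Z) (n : nat) (x : R) : 0 <= x <= 1 ->
  exists z : Z, Nat.iter n (T alpha (IZR m)) x = IZR m ^ n * x + drift alpha (IZR m) n + IZR z.
Proof.
  intros Hx; induction n as [|n [z Hz]].
  - exists 0%Z; cbn; ring.
  - destruct (T_eq_mod1 alpha (IZR m) (Nat.iter n (T alpha (IZR m)) x)) as [z' Hz'].
    { apply iter_T_range; exact Hx. }
    exists (m * z + z')%Z; rewrite Nat.iter_succ, Hz', Hz, plus_IZR, mult_IZR; cbn [pow drift]; ring.
Qed.

Lemma T_full_branches_dense_integer (alpha : R) (m : Z) :
  (1 < m)%Z -> full_branches_dense (T alpha (IZR m)).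
Proof.
  intros Hm a b Ha Hab Hb.
  set (beta := IZR m).
  assert (Hbeta : 1 < beta) by (apply IZR_lt; exact Hm).
  destruct (Pow_x_infinity beta ltac:(rewrite Rabs_pos_eq; lra) (2 / (b - a))) as [N HN].
  specialize (HN N (le_n N)); rewrite Rabs_pos_eq in HN by (apply pow_le; lra).
  set (P := beta ^ N) in *; set (C := drift alpha beta N).
  assert (HP : 0 < P) by (apply pow_lt; lra).
  assert (HPlong : 2 <= P * (b - a)).
  { apply (Rmult_le_reg_r (/ (b - a))); [apply Rinv_0_lt_compat; lra|].
    rewrite Rmult_assoc, Rinv_r, Rmult_1_r by lra; unfold Rdiv in HN; lra. }
  (* the first point of P^-1 (Z - C) to the right of a starts a full branch of T^N *)
  destruct (archimed (P * a + C)) as [Hk Hk1]; set (k := up (P * a + C)) in *.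
  exists N, ((IZR k - C) / P), ((IZR k + 1 - C) / P).
  assert (Ep : P * ((IZR k - C) / P) = IZR k - C) by (field; lra).
  assert (Eq : P * ((IZR k + 1 - C) / P) = IZR k + 1 - C) by (field; lra).
  split; [nra|]; split; [nra|]; split; [nra|].
  intros x Hx.
  destruct (iter_T_eq_mod1 alpha m N x ltac:(nra)) as [z Hz]; fold beta P C in Hz.
  pose proof (iter_T_range alpha beta N x ltac:(nra)) as Hrange.
  assert (Hw : 0 < P * x + C - IZR k < 1) by nra.
  assert (Hzk : (z + k = 0)%Z) by (apply IZR_eq0_of_small; rewrite plus_IZR; lra).
  assert (IZR z = - IZR k) by (rewrite <- opp_IZR; f_equal; lia).
  rewrite Hz; replace ((x - (IZR k - C) / P) / ((IZR k + 1 - C) / P - (IZR k - C) / P))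
    with (P * x + C - IZR k) by (field; lra); lra.
Qed.

Theorem propositionA1 (alpha beta : R) :
  0 <= alpha < 1 -> 2 <= beta -> transitive_on01 (T alpha beta).
Proof.
  intros _ Hbeta; apply transitive_on01_of_full_branches_dense.
  destruct (Rle_lt_or_eq_dec 2 beta Hbeta) as [Hexpanding | <-].
  - exact (T_full_branches_dense_expanding alpha beta Hexpanding).
  - exact (T_full_branches_dense_integer alpha 2 ltac:(lia)).
Qed.
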